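(* Let $(\check{x}, \check{y}) \in E$ be a feasible solution of (A). Suppose that the functions $\varphi_k$ are $\partial^{u}_D$-pseudoconvex at $(\check{x}, \check{y})$ for every $k = 1,\dots,n$, that the functions $\mathcal{H}_j$ ($j \in J_0(\check{x},\check{y})$), $\phi_s$ ($s \in S_0(\check{x},\check{y})$) and $\Psi$ are $\partial^{u}_D$-quasiconvex at $(\check{x}, \check{y})$, and that $(x,y) - (\check{x}, \check{y}) \in D$ for the feasible points $(x,y)\in E$. If there exists $\delta^* = (\xi^*, \tau^*, \rho^*, \eta^* ) \in \mathbb{R}_+^{n+p+q+1}$ with $\xi^* \neq 0_{\mathbb{R}^n}$ such that \[ (0,0) \in \sum_{k=1}^{n} \xi^*_k\, \partial^{us}_D \varphi_k(\check{x},\check{y}) + \sum_{j=1}^{p} \tau_j^*\, \partial^{u}_D \mathcal{H}_j(\check{x},\check{y}) + \sum_{s=1}^{q} \rho^*_s\, \partial^{u}_D \phi_s(\check{x},\check{y}) + \eta^*\, \partial^{u}_D \Psi(\check{x},\check{y}) + N_D(0_{n_1+n_2}), \] \[ \tau_j^* \mathcal{H}_j(\check{x},\check{y}) = 0 \ \ \forall j \in J, \qquad \rho^*_s \phi_s(\check{x},\check{y}) = 0 \ \ \forall s \in S, \] where $\partial^{us}_D \varphi_k(\check{x},\check{y}) = \partial^{us}_D \mathcal{F}_k(\check{x},\check{y}) + \Phi_k(\check{x},\check{y})\,\partial^{us}_D(-\mathcal{G}_k)(\check{x},\check{y})$, then $(\check{x}, \check{y})$ is a weak Pareto solution of (A)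.
   Context: Problem (A) is the multiobjective fractional bilevel problem: $\mathbb{R}^n_+$-minimize $\big(\mathcal{F}_1(x,y)/\mathcal{G}_1(x,y),\dots,\mathcal{F}_n(x,y)/\mathcal{G}_n(x,y)\big)$ over $(x,y)\in\mathbb{R}^{n_1}\times\mathbb{R}^{n_2}$ subject to $\mathcal{H}_j(x,y)\le 0$ for all $j\in J=\{1,\dots,p\}$ and $y\in\mathfrak{B}(x)$, where $\mathfrak{B}(x)$ is the solution set of the lower level problem $\min_y f(x,y)$ s.t. $\phi_s(x,y)\le 0$, $s\in S=\{1,\dots,q\}$; all functions are real-valued, and $\mathcal{F}_k\ge 0$, $\mathcal{G}_k>0$ on the feasible set. $(\check{x},\check{y})$ is a weak Pareto solution of (A) if there is no feasible $(x,y)$ with $\mathcal{F}_k(x,y)/\mathcal{G}_k(x,y) < \mathcal{F}_k(\check{x},\check{y})/\mathcal{G}_k(\check{x},\check{y})$ for all $k$. With $Y(x)=\{y:\phi_s(x,y)\le0\ \forall s\}$ uniformly bounded around $\check{x}$, $\Theta$ is the compact set $cl(\bigcup_{x\in \mathbb{U}_{\check{x}}}Y(x))$ plus the closed unit ball, $\Delta_C(z) = -d(z,\mathbb{R}^m\setminus C)$ if $z\in C$ and $d(z,C)$ otherwise, and $\Psi(x,y)=\max_{z\in\Theta}\min\{f(x,y)-f(x,z),\,-\Delta_{-\mathbb{R}^q_+}(\phi_1(x,z),\dots,\phi_q(x,z))\}$. The single-level feasible set is $E=\{(x,y): \mathcal{H}_j(x,y)\le0\ \forall j\in J,\ \phi_s(x,y)\le0\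 \forall s\in S,\ \Psi(x,y)\le0\}$. Set $\Phi_k(\check{x},\check{y})=\mathcal{F}_k(\check{x},\check{y})/\mathcal{G}_k(\check{x},\check{y})$ and $\varphi_k(x,y)=\mathcal{F}_k(x,y)-\Phi_k(\check{x},\check{y})\mathcal{G}_k(x,y)$. $J_0(\check{x},\check{y})=\{j:\mathcal{H}_j(\check{x},\check{y})=0\}$, $S_0(\check{x},\check{y})=\{s:\phi_s(\check{x},\check{y})=0\}$. A direction $d$ is a continuity direction of $h$ at $x$ if $h(x+p_kd)\to h(x)$ for all $p_k\searrow0$; $D$ is the intersection of the sets of continuity directions at $(\check{x},\check{y})$ of all $\Phi_k$, $\mathcal{H}_j$, $\phi_s$ and $\Psi$, and $N_D(0_{n_1+n_2})=T(D,0_{n_1+n_2})^\circ$ (negative polar of the contingent cone). A closed set $\partial^u_D h(x)$ is a directional upper convexificator (DUCF) of $h$ at $x$ if $h^-(x;d)\le\sup_{x^*\in\partial^u_D h(x)}\langle x^*,d\rangle$ for all $d\in D$, and a closed set $\partial^{us}_D h(x)$ is a directional upper semi-regular convexificator (DUSRCF) if the same holds with the upper Dini derivative $h^+(x;d)$; here $\mathcal{F}_k,-\mathcal{G}_k$ admit DUSRCFs and $\mathcal{H}_j,\phi_s,\Psi$ admit DUCFs at $(\check{x},\check{y})$. A function $h$ with directional convexificator $\partial^u_D h(\check{a},\check{b})$ is $\partial^u_D$-quasiconvex at $(\check{a},\check{b})$ if for all $(a,b)$ with $(a,b)-(\check{a},\check{b})\in D$: $h(a,b)\le h(\check{a},\check{b})$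 implies $\langle x^*,(a,b)-(\check{a},\check{b})\rangle\le0$ for all $x^*\in\partial^u_D h(\check{a},\check{b})$; it is $\partial^u_D$-pseudoconvex if for all $(a,b)$ with $(a,b)-(\check{a},\check{b})\in D\setminus\{0\}$: $h(a,b)<h(\check{a},\check{b})$ implies $\langle x^*,(a,b)-(\check{a},\check{b})\rangle<0$ for all $x^*\in\partial^u_D h(\check{a},\check{b})$. *)

From HB Require Import structures.
From mathcomp Require Import all_boot all_order all_algebra.
From mathcomp Require Import all_classical all_reals all_analysis.
Set Implicit Arguments. Unset Strict Implicit. Unset Printing Implicit Defensive.
Import Order.TTheory GRing.Theory Num.Theory.
Import numFieldNormedType.Exports.
Local Open Scope classical_set_scope.
Local Open Scope ring_scope.

Section Defs.
Variables (R : realType) (n1 n2 : nat).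

Definition pt := ('rV[R]_n1 * 'rV[R]_n2)%type.

Definition padd (a b : pt) : pt := (a.1 + b.1, a.2 + b.2).
Definition psub (a b : pt) : pt := (a.1 - b.1, a.2 - b.2).
Definition pscale (t : R) (a : pt) : pt := (t *: a.1, t *: a.2).
Definition pzero : pt := (0, 0).

Definition pdot (a b : pt) : R :=
  \sum_(i < n1) a.1 ord0 i * b.1 ord0 i + \sum_(i < n2) a.2 ord0 i * b.2 ord0 i.

Definition cont_dir (h : pt -> R) (a : pt) (d : pt) : Prop :=
  forall p : nat -> R,
    (forall k, 0 < p k) -> (forall k, p k.+1 <= p k) -> p @ \oo --> 0 ->
    (fun k => h (padd a (pscale (p k) d))) @ \oo --> h a.

Definition contingent (C : set pt) (a : pt) : set pt :=
  [set v | exists (t : nat -> R) (w : nat -> pt),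
      (forall k, 0 < t k) /\ t @ \oo --> 0 /\ w @ \oo --> v /\
      (forall k, C (padd a (pscale (t k) (w k))))].

Definition neg_polar (K : set pt) : set pt :=
  [set u | forall v, K v -> pdot u v <= 0].

Definition dini_quot (h : pt -> R) (a d : pt) (t : R) : R :=
  (h (padd a (pscale t d)) - h a) / t.

Definition dini_lower (h : pt -> R) (a d : pt) : \bar R :=
  ereal_sup [set ereal_inf [set (dini_quot h a d t)%:E | t in `]0, e[]
            | e in `]0, +oo[].

Definition dini_upper (h : pt -> R) (a d : pt) : \bar R :=
  ereal_inf [set ereal_sup [set (dini_quot h a d t)%:E | t in `]0, e[]
            | e in `]0, +oo[].

Definition sup_pairing (S : set pt) (d : pt) : \bar R :=
  ereal_sup [set (pdot u d)%:E | u in S].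

Definition DUCF (h : pt -> R) (a : pt) (D : set pt) (S : set pt) : Prop :=
  closed S /\ forall d, D d -> (dini_lower h a d <= sup_pairing S d)%E.

Definition DUSRCF (h : pt -> R) (a : pt) (D : set pt) (S : set pt) : Prop :=
  closed S /\ forall d, D d -> (dini_upper h a d <= sup_pairing S d)%E.

Definition quasiconvex_at (h : pt -> R) (a : pt) (D : set pt) (S : set pt) : Prop :=
  forall b, D (psub b a) -> h b <= h a -> forall u, S u -> pdot u (psub b a) <= 0.

Definition pseudoconvex_at (h : pt -> R) (a : pt) (D : set pt) (S : set pt) : Prop :=
  forall b, D (psub b a) -> psub b a <> pzero -> h b < h a ->
    forall u, S u -> pdot u (psub b a) < 0.

Definition msum_scale (S1 : set pt) (c : R) (S2 : set pt) : set pt :=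
  [set padd u (pscale c v) | u in S1 & v in S2].

End Defs.

Section Bilevel.
Variables (R : realType) (n1 n2 q : nat).

Definition enorm (m : nat) (z : 'rV[R]_m) : R := Num.sqrt (\sum_(i < m) z ord0 i ^+ 2).
Definition edist (m : nat) (z : 'rV[R]_m) (C : set 'rV[R]_m) : R :=
  inf [set enorm (z - c) | c in C].

Definition negorthant : set 'rV[R]_q := [set z | forall s, z ord0 s <= 0].

Definition Delta (C : set 'rV[R]_q) (z : 'rV[R]_q) : R :=
  if `[< C z >] then - edist z (~` C) else edist z C.

Variable phi : 'I_q -> pt R n1 n2 -> R.
Variable f : pt R n1 n2 -> R.

Definition Yset (x : 'rV[R]_n1) : set 'rV[R]_n2 := [set y | forall s, phi s (x, y) <= 0].

Definition Bset (x : 'rV[R]_n1) : set 'rV[R]_n2 :=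
  [set y | Yset x y /\ forall z, Yset x z -> f (x, y) <= f (x, z)].

Definition Theta (U : set 'rV[R]_n1) : set 'rV[R]_n2 :=
  [set a + b | a in closure (\bigcup_(x in U) Yset x)
             & b in [set b : 'rV[R]_n2 | enorm b <= 1]].

Definition phivec (x : 'rV[R]_n1) (z : 'rV[R]_n2) : 'rV[R]_q := \row_s phi s (x, z).

(* Psi (the max over the compact set Theta is written as a sup) *)
Definition Psi (U : set 'rV[R]_n1) (p : pt R n1 n2) : R :=
  sup [set Num.min (f p - f (p.1, z)) (- Delta negorthant (phivec p.1 z)) | z in Theta U].

End Bilevel.

Section Problem.
Variables (R : realType) (n1 n2 n p q : nat).
Variables (F G : 'I_n -> pt R n1 n2 -> R) (H : 'I_p -> pt R n1 n2 -> R)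
          (f : pt R n1 n2 -> R) (phi : 'I_q -> pt R n1 n2 -> R).

Definition feasA : set (pt R n1 n2) :=
  [set a | (forall j, H j a <= 0) /\ Bset phi f a.1 a.2].

Definition Eset (U : set 'rV[R]_n1) : set (pt R n1 n2) :=
  [set a | (forall j, H j a <= 0) /\ (forall s, phi s a <= 0) /\ Psi phi f U a <= 0].

Definition fratio (k : 'I_n) (a : pt R n1 n2) : R := F k a / G k a.

Definition varphi (ac : pt R n1 n2) (k : 'I_n) (a : pt R n1 n2) : R :=
  F k a - fratio k ac * G k a.

Definition weak_pareto (ac : pt R n1 n2) : Prop :=
  ~ exists a, feasA a /\ forall k, fratio k a < fratio k ac.

Definition Dset (U : set 'rV[R]_n1) (ac : pt R n1 n2) : set (pt R n1 n2) :=
  [set d | (forall k, cont_dir (fratio k) ac d) /\ (forall j, cont_dir (H j) ac d) /\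
           (forall s, cont_dir (phi s) ac d) /\ cont_dir (Psi phi f U) ac d].

End Problem.

From Pilot Require Import Defs.
From HB Require Import structures.
From mathcomp Require Import all_boot all_order all_algebra.
From mathcomp Require Import all_classical all_reals all_analysis.
From mathcomp Require Import lra.
Set Implicit Arguments. Unset Strict Implicit. Unset Printing Implicit Defensive.
Import Order.TTheory GRing.Theory Num.Theory.
Import numFieldNormedType.Exports.
Local Open Scope classical_set_scope.
Local Open Scope ring_scope.

(** Suppose a feasible [a] beats [ac] strictly in every ratio and put
    [d := a - ac].  Then every [varphi_k] drops strictly from [ac] to [a],
    the active constraints stay [<= 0], and [Psi a <= 0 <= Psi ac] since
    both points solve the lower-level problem.  Pseudoconvexity and
    quasiconvexity turn this into [<u_k, d> < 0] and [<v, d> <= 0] for the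
    convexificator elements of the multiplier rule, while [<nu, d> <= 0]
    since [D] is a cone, so [d] lies in its contingent cone at [0].  Pairing
    the stationarity condition with [d] then gives [0 < 0]. *)

Section SignLemmas.
Variable R : numDomainType.

Lemma sumr_lt0 (I : finType) (F : I -> R) (i0 : I) :
  (forall i, F i <= 0) -> F i0 < 0 -> \sum_i F i < 0.
Proof.
move=> F_le0 Fi0_lt0; rewrite (bigD1 i0) //=.
by rewrite ltr_wnDr // sumr_le0.
Qed.

Lemma sumr_slack_le0 (I : finType) (t h x : I -> R) :
  (forall i, 0 <= t i) -> (forall i, t i * h i = 0) ->
  (forall i, h i = 0 -> x i <= 0) -> \sum_i t i * x i <= 0.
Proof.
move=> t_ge0 slack hx; apply: sumr_le0 => i _.
have /eqP := slack i; rewrite mulf_eq0 => /orP[/eqP -> | /eqP h0].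
  by rewrite mul0r.
exact: mulr_ge0_le0 (hx i h0).
Qed.

End SignLemmas.

Section InnerProduct.
Variables (R : realType) (n1 n2 : nat).
Implicit Types (a b d : pt R n1 n2).

Lemma pdotDl a b d : pdot (a + b) d = pdot a d + pdot b d.
Proof.
rewrite /pdot /= addrACA -!big_split /=.
by congr (_ + _); apply: eq_bigr => i _; rewrite mxE mulrDl.
Qed.

Lemma pdot0l d : pdot 0 d = 0.
Proof. by rewrite /pdot /= !big1 ?addr0 // => i _; rewrite mxE mul0r. Qed.

Lemma pdotZl c a d : pdot (pscale c a) d = c * pdot a d.
Proof.
rewrite /pdot /= mulrDr !mulr_sumr.
by congr (_ + _); apply: eq_bigr => i _; rewrite mxE mulrA.
Qed.

Lemma pdot_lincomb (I : finType) (c : I -> R) (u : I -> pt R n1 n2) d :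
  pdot (\sum_i pscale (c i) (u i)) d = \sum_i c i * pdot (u i) d.
Proof.
rewrite (big_morph (fun a => pdot a d) (fun a b => pdotDl a b d) (pdot0l d)).
by apply: eq_bigr => i _; rewrite pdotZl.
Qed.

Lemma psub_eq0 a b : psub a b = pzero R n1 n2 -> a = b.
Proof.
case: a b => [a1 a2] [b1 b2] [/eqP + /eqP].
by rewrite !subr_eq0 => /eqP -> /eqP ->.
Qed.

End InnerProduct.

Section Cones.
Variables (R : realType) (n1 n2 : nat).
Implicit Types (a d : pt R n1 n2) (h : pt R n1 n2 -> R).

Lemma cont_dir_scale h a d c :
  0 < c -> cont_dir h a d -> cont_dir h a (pscale c d).
Proof.
move=> c_gt0 hd t t_gt0 t_dec t_cvg.
have -> : (fun k => h (padd a (pscale (t k) (pscale c d)))) =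
          (fun k => h (padd a (pscale (t k * c) d))).
  by apply: funext => k; rewrite /pscale /= !scalerA.
apply: hd => [k | k |]; first by rewrite mulr_gt0.
  by rewrite ler_pM2r.
by rewrite -(mul0r c); apply: cvgM => //; exact: cvg_cst.
Qed.

Lemma contingent0_ray (C : set (pt R n1 n2)) d :
  (forall t, 0 < t -> C (pscale t d)) -> contingent C (pzero R n1 n2) d.
Proof.
move=> Cray; exists harmonic, (fun=> d); split; first exact: harmonic_gt0.
split; first exact: cvg_harmonic.
split; first exact: cvg_cst.
by move=> k; rewrite /padd /= !add0r; exact: Cray (harmonic_gt0 k).
Qed.

End Cones.

Section Distance.
Variable R : realType.

Lemma edist_ge0 m (z : 'rV[R]_m) C : 0 <= Defs.edist z C.
Proof.
rewrite /Defs.edist; have [->|/set0P[c Cc]] := eqVneq C set0.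
  by rewrite image_set0 inf0.
apply: lb_le_inf; first by exists (enorm (z - c)), c.
by move=> _ [c' _ <-]; rewrite /enorm sqrtr_ge0.
Qed.

Lemma enorm0 m : enorm (0 : 'rV[R]_m) = 0.
Proof. by rewrite /enorm big1 ?sqrtr0 // => i _; rewrite mxE expr0n. Qed.

End Distance.

Section LowerLevel.
Variables (R : realType) (n1 n2 q : nat).
Variables (phi : 'I_q -> pt R n1 n2 -> R) (f : pt R n1 n2 -> R).
Variable U : set 'rV[R]_n1.

Lemma Psi_term_le0 x y z : Bset phi f x y ->
  Num.min (f (x, y) - f (x, z)) (- Delta (@negorthant R q) (phivec phi x z)) <= 0.
Proof.
move=> [_ y_opt]; rewrite ge_min /Delta; case: asboolP => [z_feas | _].
  by rewrite subr_le0 y_opt // => s; have := z_feas s; rewrite mxE.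
by rewrite oppr_le0 edist_ge0 orbT.
Qed.

Lemma Psi_le0 x y : Bset phi f x y -> Psi phi f U (x, y) <= 0.
Proof.
move=> xy_opt; rewrite /Psi /=; set A := [set _ | _ in _].
have [->|A_nonempty] := eqVneq A set0; first by rewrite sup0.
apply: ge_sup; first exact/set0P.
by move=> _ [z _ <-]; exact: Psi_term_le0.
Qed.

(* The term [z = y] of the supremum is [min 0 (dist (phivec x y) (~` -R^q_+))]. *)
Lemma Psi_ge0 x y : U x -> Bset phi f x y -> 0 <= Psi phi f U (x, y).
Proof.
move=> Ux xy_opt; rewrite /Psi /=.
have y_Theta : Theta phi U y.
  exists y; first by apply: subset_closure; exists x => //; exact: xy_opt.1.
  by exists 0; rewrite ?addr0 //= enorm0.
apply: le_trans (ub_le_sup _ _); last by exists y.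
  rewrite le_min subrr lexx /Delta; case: asboolP => [_ | y_infeas].
    by rewrite opprK edist_ge0.
  by exfalso; apply: y_infeas => s; rewrite mxE; exact: xy_opt.1.
by exists 0 => _ [z _ <-]; exact: Psi_term_le0.
Qed.

End LowerLevel.

Section Problem.
Variables (R : realType) (n1 n2 n p q : nat).
Variables (F G : 'I_n -> pt R n1 n2 -> R) (H : 'I_p -> pt R n1 n2 -> R).
Variables (f : pt R n1 n2 -> R) (phi : 'I_q -> pt R n1 n2 -> R).
Variable U : set 'rV[R]_n1.
Implicit Types (a ac d : pt R n1 n2).

Lemma feasA_Eset a : feasA H f phi a -> Eset H f phi U a.
Proof.
case: a => x y [H_le0 xy_opt]; split=> //; split; first exact: xy_opt.1.
exact: Psi_le0.
Qed.

Lemma Dset_cone ac d : Dset F G H f phi U ac d ->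
  forall t, 0 < t -> Dset F G H f phi U ac (pscale t d).
Proof.
move=> [dF [dH [dphi dPsi]]] t t_gt0.
by do !split=> *; apply: cont_dir_scale.
Qed.

Lemma varphi_at_eq0 ac k : G k ac != 0 -> varphi F G ac k ac = 0.
Proof. by move=> Gk_neq0; rewrite /varphi /fratio divfK ?subrr. Qed.

Lemma varphi_lt0 ac a k :
  0 < G k a -> fratio F G k a < fratio F G k ac -> varphi F G ac k a < 0.
Proof. by move=> Gk_gt0; rewrite /varphi {1}/fratio ltr_pdivrMr // subr_lt0. Qed.

End Problem.

Theorem theorem2 (R : realType) (n1 n2 n p q : nat)
  (F G : 'I_n -> pt R n1 n2 -> R) (H : 'I_p -> pt R n1 n2 -> R)
  (f : pt R n1 n2 -> R) (phi : 'I_q -> pt R n1 n2 -> R)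
  (U : set 'rV[R]_n1) (xc : 'rV[R]_n1) (yc : 'rV[R]_n2)
  (dF dmG : 'I_n -> set (pt R n1 n2)) (dH : 'I_p -> set (pt R n1 n2))
  (dphi : 'I_q -> set (pt R n1 n2)) (dPsi : set (pt R n1 n2))
  (xi : 'I_n -> R) (tau : 'I_p -> R) (rho : 'I_q -> R) (eta : R) :
  (* standing assumptions *)
  nbhs xc U ->
  bounded_set (\bigcup_(x in U) Yset phi x) ->
  (forall a, feasA H f phi a -> forall k, 0 <= F k a) ->
  (forall a, feasA H f phi a -> forall k, 0 < G k a) ->
  let ac : pt R n1 n2 := (xc, yc) in
  let D := Dset F G H f phi U ac in
  let Psi0 := Psi phi f U in
  (forall k, DUSRCF (F k) ac D (dF k)) ->
  (forall k, DUSRCF (fun a => - G k a) ac D (dmG k)) ->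
  (forall j, DUCF (H j) ac D (dH j)) ->
  (forall s, DUCF (phi s) ac D (dphi s)) ->
  DUCF Psi0 ac D dPsi ->
  (* the point *)
  Eset H f phi U ac -> feasA H f phi ac ->
  (* generalized convexity *)
  (forall k, pseudoconvex_at (varphi F G ac k) ac D
               (msum_scale (dF k) (fratio F G k ac) (dmG k))) ->
  (forall j, H j ac = 0 -> quasiconvex_at (H j) ac D (dH j)) ->
  (forall s, phi s ac = 0 -> quasiconvex_at (phi s) ac D (dphi s)) ->
  quasiconvex_at Psi0 ac D dPsi ->
  (forall a, Eset H f phi U a -> D (psub a ac)) ->
  (* multipliers *)
  (forall k, 0 <= xi k) -> (exists k, xi k != 0) ->
  (forall j, 0 <= tau j) -> (forall s, 0 <= rho s) -> 0 <= eta ->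
  (exists (u : 'I_n -> pt R n1 n2) (v : 'I_p -> pt R n1 n2)
          (w : 'I_q -> pt R n1 n2) (z : pt R n1 n2) (nu : pt R n1 n2),
     (forall k, msum_scale (dF k) (fratio F G k ac) (dmG k) (u k)) /\
     (forall j, dH j (v j)) /\ (forall s, dphi s (w s)) /\ dPsi z /\
     neg_polar (contingent D (pzero R n1 n2)) nu /\
     (\sum_(k < n) pscale (xi k) (u k)).1 + (\sum_(j < p) pscale (tau j) (v j)).1
       + (\sum_(s < q) pscale (rho s) (w s)).1 + (pscale eta z).1 + nu.1 = 0 /\
     (\sum_(k < n) pscale (xi k) (u k)).2 + (\sum_(j < p) pscale (tau j) (v j)).2
       + (\sum_(s < q) pscale (rho s) (w s)).2 + (pscale eta z).2 + nu.2 = 0) ->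
  (forall j, tau j * H j ac = 0) ->
  (forall s, rho s * phi s ac = 0) ->
  weak_pareto F G H f phi ac.
Proof.
move=> xc_U _ _ G_gt0 ac D Psi0 _ _ _ _ _ _ ac_feas varphi_pc H_qc phi_qc Psi_qc
  E_D xi_ge0 [k0 xik0_neq0] tau_ge0 rho_ge0 eta_ge0
  [u [v [w [z [nu [u_sub [v_sub [w_sub [z_sub [nu_polar [eq1 eq2]]]]]]]]]]]
  tau_slack rho_slack [a [a_feas ratio_lt]].
have Ea : Eset H f phi U a := feasA_Eset U a_feas.
have Dd : D (psub a ac) := E_D a Ea.
set d := psub a ac in Dd.
have d_neq0 : d <> pzero R n1 n2.
  by move=> /psub_eq0 a_ac; have := ratio_lt k0; rewrite a_ac ltxx.
have varphi_drop k : varphi F G ac k a < varphi F G ac k ac.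
  by rewrite varphi_at_eq0 ?gt_eqF ?(G_gt0 _ ac_feas) ?varphi_lt0 ?(G_gt0 _ a_feas).
have u_d k : pdot (u k) d < 0 := varphi_pc k a Dd d_neq0 (varphi_drop k) _ (u_sub k).
have xi_part : \sum_k xi k * pdot (u k) d < 0.
  apply: (sumr_lt0 (i0 := k0)) => [k|]; first exact: mulr_ge0_le0 (ltW (u_d k)).
  by rewrite pmulr_rlt0 ?u_d // lt_def xik0_neq0 xi_ge0.
have tau_part : \sum_j tau j * pdot (v j) d <= 0.
  apply: sumr_slack_le0 tau_ge0 tau_slack _ => j Hj0.
  by apply: (H_qc j Hj0 a Dd _ _ (v_sub j)); rewrite Hj0 a_feas.1.
have rho_part : \sum_s rho s * pdot (w s) d <= 0.
  apply: sumr_slack_le0 rho_ge0 rho_slack _ => s phis0.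
  by apply: (phi_qc s phis0 a Dd _ _ (w_sub s)); rewrite phis0 Ea.2.1.
have Psi_drop : Psi0 a <= Psi0 ac.
  exact: le_trans Ea.2.2 (Psi_ge0 (nbhs_singleton xc_U) ac_feas.2).
have eta_part : eta * pdot z d <= 0 := mulr_ge0_le0 eta_ge0 (Psi_qc a Dd Psi_drop z z_sub).
have nu_part : pdot nu d <= 0 := nu_polar d (contingent0_ray (Dset_cone Dd)).
have stationary : \sum_k pscale (xi k) (u k) + \sum_j pscale (tau j) (v j)
    + \sum_s pscale (rho s) (w s) + pscale eta z + nu = 0 :> pt R n1 n2.
  by apply: injective_projections; [exact: eq1 | exact: eq2].
move: (congr1 (fun b => pdot b d) stationary).
rewrite pdot0l !pdotDl !pdot_lincomb pdotZl; lra.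
Qed.
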